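(* Let $I=[a,b]$ be a compact interval, $r\ge 1$ an integer, $\varphi\in C^r(I,\mathbb{R})$, and put $C_r:=\|\varphi^{(r)}\|_{L^\infty(I)}$. Then there exists a decomposition of the set $\{x\in I:\varphi(x)\neq 0\}$ into pairwise disjoint intervals $I_{\lambda,\iota}$, where $\lambda$ ranges over the set of all positive dyadic numbers $\lambda\le\|\varphi\|_\infty$ and, for each such $\lambda$, $\iota$ ranges over an index set $\mathcal{I}_\lambda$, such that: (i) $|\mathcal{I}_\lambda|\le 10r\big(1+|I|\,C_r^{1/r}\lambda^{-1/r}\big)$ for every such $\lambda$; (ii) for every such $\lambda$, every $\iota\in\mathcal{I}_\lambda$ and every $x\in I_{\lambda,\iota}$ one has $\tfrac12\lambda<|\varphi(x)|<4\lambda$.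
   Context: A dyadic number is a number of the form $2^j$, $j\in\mathbb{Z}$. $|I|$ denotes the length of $I$ and $|\mathcal{I}_\lambda|$ the cardinality of the index set. *)

From Stdlib Require Import Reals ZArith.
From Coquelicot Require Import Coquelicot.
Open Scope R_scope.

Definition inI (a b x : R) : Prop := a <= x <= b.

Definition has_derive_on (a b : R) (f f' : R -> R) : Prop :=
  forall x, inI a b x ->
    filterlim (fun y => (f y - f x) / (y - x))
      (within (fun y => inI a b y /\ y <> x) (locally x)) (locally (f' x)).

Definition continuous_on_I (a b : R) (f : R -> R) : Prop :=
  forall x, inI a b x ->
    filterlim f (within (inI a b) (locally x)) (locally (f x)).

Definition is_Cr (a b : R) (r : nat) (phi : R -> R) (D : nat -> R -> R) : Prop :=
  (forall x, inI a b x -> D 0%nat x = phi x) /\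
  (forall k, (k < r)%nat -> has_derive_on a b (D k) (D (S k))) /\
  continuous_on_I a b (D r).

(* sup_{x in [a,b]} |f x|  (= L^oo norm on [a,b] for continuous f, a < b). *)
Definition sup_norm (a b : R) (f : R -> R) : R :=
  real (Lub_Rbar (fun y => exists x, inI a b x /\ y = Rabs (f x))).

(* x^(1/r) for x >= 0, with the convention 0^(1/r) = 0. *)
Definition rroot (r : nat) (x : R) : R :=
  if Rlt_dec 0 x then Rpower x (/ INR r) else 0.

Definition is_interval (J : R -> Prop) : Prop :=
  forall x y z, J x -> J y -> x <= z <= y -> J z.

(* Label every point [x] with [phi x <> 0] by a dyadic level [lambda] with
   hysteresis: [x] has level [lambda] if [|phi|] has stayed in [(lambda/2, 2 lambda)]
   since it last equalled [lambda].  Levels are unique, and the intervals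
   [I_{lambda,i}] are the connected components of the set of points of level
   [lambda], which gives (ii).  Between two consecutive components of level [lambda],
   [|phi|] passes from outside [(lambda/2, 2 lambda)] to exactly [lambda], so [phi]
   crosses one of the four values [±3 lambda/4], [±3 lambda/2] after being at
   distance [>= lambda/4] from it.  Cut [I] into cells of length [h] with
   [C_r h^r < lambda/4].  If a cell held [4 (r - 1) + 1] consecutive crossings, [r]
   of them would cross the same value [L], so [phi - L] would have [r] zeros in the
   cell and Rolle's theorem would give [|phi - L| <= C_r h^r < lambda/4] on the whole
   cell, a contradiction.  Counting crossings cell by cell gives (i). *)

From Stdlib Require Import Reals ZArith Lra Lia List Sorted Classical ClassicalEpsilon.
From Coquelicot Require Import Coquelicot.
Open Scope R_scope.

(** * Zeros of derivatives *)

Lemma rolle_lim (f f' : R -> R) u v : u < v -> f u = f v ->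
  (forall x, u <= x <= v -> continuity_pt f x) ->
  (forall x, u < x < v -> derivable_pt_lim f x (f' x)) ->
  exists c, u < c < v /\ f' c = 0.
Proof.
  intros Huv Hf Hc Hd.
  destruct (Rolle f u v (fun x Hx => exist _ (f' x) (Hd x Hx)) Hc Huv Hf) as [c [Hcuv Hc0]].
  now exists c.
Qed.

Lemma lipschitz_of_derive_bound (f f' : R -> R) u v B x y :
  (forall t, u <= t <= v -> continuity_pt f t) ->
  (forall t, u < t < v -> derivable_pt_lim f t (f' t)) ->
  (forall t, u <= t <= v -> Rabs (f' t) <= B) ->
  u <= x <= v -> u <= y <= v -> Rabs (f x - f y) <= B * Rabs (x - y).
Proof.
  intros Hc Hd HB Hx Hy.
  assert (Hmin : u <= Rmin y x) by (apply Rmin_glb; lra).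
  assert (Hmax : Rmax y x <= v) by (apply Rmax_lub; lra).
  destruct (MVT_gen f y x f') as [c [Hc' ->]].
  - intros t Ht. apply is_derive_Reals, Hd. simpl in Ht. lra.
  - intros t Ht. apply Hc. simpl in Ht. lra.
  - rewrite Rabs_mult. apply Rmult_le_compat_r; [apply Rabs_pos|]. apply HB. lra.
Qed.

Lemma rolle_zeros (f f' : R -> R) (u v : R) (z : nat -> R) (k : nat) :
  (forall x, u <= x <= v -> continuity_pt f x) ->
  (forall x, u < x < v -> derivable_pt_lim f x (f' x)) ->
  (forall i, (i <= k)%nat -> u <= z i <= v /\ f (z i) = 0) ->
  (forall i, (i < k)%nat -> z i < z (S i)) ->
  exists w : nat -> R, forall i, (i < k)%nat -> z i < w i < z (S i) /\ f' (w i) = 0.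
Proof.
  intros Hc Hd Hz Hzs.
  assert (Hw : forall i, exists w, (i < k)%nat -> z i < w < z (S i) /\ f' w = 0).
  { intros i. destruct (Nat.lt_ge_cases i k) as [Hi|Hi]; [|exists 0; intros; lia].
    destruct (Hz i ltac:(lia)) as [Hzi Hfi], (Hz (S i) Hi) as [HzSi HfSi].
    destruct (rolle_lim f f' (z i) (z (S i))) as [c Hc'].
    - now apply Hzs.
    - congruence.
    - intros x Hx. apply Hc. lra.
    - intros x Hx. apply Hd. lra.
    - now exists c. }
  destruct (choice _ Hw) as [w Hw']. now exists w.
Qed.

(* Rolle passes [k - 1] ordered zeros on to [f 1]; the mean value theorem from a
   zero of [f 0] then gains one factor [v - u]. *)
Lemma bound_from_zeros (k : nat) : forall (f : nat -> R -> R) (u v M : R) (z : nat -> R),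
  (forall i x, (i < k)%nat -> continuity_pt (f i) x) ->
  (forall i x, (i < k)%nat -> u < x < v -> derivable_pt_lim (f i) x (f (S i) x)) ->
  (forall x, u <= x <= v -> Rabs (f k x) <= M) ->
  (forall i, (i < k)%nat -> u <= z i <= v /\ f 0%nat (z i) = 0) ->
  (forall i, (S i < k)%nat -> z i < z (S i)) ->
  forall x, u <= x <= v -> Rabs (f 0%nat x) <= M * (v - u) ^ k.
Proof.
  induction k as [|k IH]; intros f u v M z Hc Hd HM Hz Hzs x Hx.
  { rewrite pow_O, Rmult_1_r. now apply HM. }
  destruct (rolle_zeros (f 0%nat) (f 1%nat) u v z k) as [w Hw].
  - intros t _. apply Hc. lia.
  - intros t Ht. apply Hd; [lia|exact Ht].
  - intros i Hi. apply Hz. lia.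
  - intros i Hi. apply Hzs. lia.
  - assert (Hf1 : forall t, u <= t <= v -> Rabs (f 1%nat t) <= M * (v - u) ^ k).
    { apply (IH (fun i => f (S i)) u v M w).
      - intros i t Hi. apply Hc. lia.
      - intros i t Hi. apply Hd. lia.
      - exact HM.
      - intros i Hi. destruct (Hw i Hi) as [Hwi Hf].
        destruct (Hz i ltac:(lia)), (Hz (S i) ltac:(lia)). split; [lra|exact Hf].
      - intros i Hi. destruct (Hw i ltac:(lia)), (Hw (S i) Hi). lra. }
    destruct (Hz 0%nat ltac:(lia)) as [Hz0 Hfz0].
    pose proof (lipschitz_of_derive_bound (f 0%nat) (f 1%nat) u v _ x (z 0%nat)
      (fun t _ => Hc 0%nat t ltac:(lia)) (fun t Ht => Hd 0%nat t ltac:(lia) Ht) Hf1 Hx Hz0)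
      as Hlip.
    rewrite Hfz0, Rminus_0_r in Hlip.
    assert (HMk : 0 <= M * (v - u) ^ k) by (eapply Rle_trans; [apply Rabs_pos|apply Hf1, Hx]).
    assert (Hxz : Rabs (x - z 0%nat) <= v - u) by (apply Rabs_le; lra).
    simpl. rewrite (Rmult_comm (v - u)), <- Rmult_assoc.
    eapply Rle_trans; [exact Hlip|]. now apply Rmult_le_compat_l.
Qed.

(** * Pigeonhole and chains *)

Section Pigeonhole.

Local Open Scope nat_scope.

Fixpoint count_idx (P : nat -> bool) (s n : nat) : nat :=
  match n with
  | O => O
  | S n' => count_idx P s n' + if P (s + n') then 1 else 0
  end.

Lemma count_idx_extract (P : nat -> bool) s n t : t <= count_idx P s n ->
  exists g : nat -> nat,
    (forall k, k < t -> s <= g k < s + n /\ P (g k) = true) /\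
    (forall k, S k < t -> g k < g (S k)).
Proof.
  revert t. induction n as [|n IH]; intros t Ht; simpl in Ht.
  { exists (fun _ => O). split; intros; lia. }
  destruct (P (s + n)) eqn:HP.
  - destruct t as [|t]; [exists (fun _ => O); split; intros; lia|].
    destruct (IH t ltac:(lia)) as [g [Hg Hgs]].
    exists (fun k => if k <? t then g k else s + n). split.
    + intros k Hk. destruct (Nat.ltb_spec k t) as [Hkt|Hkt].
      * destruct (Hg k Hkt). split; [lia|assumption].
      * split; [lia|exact HP].
    + intros k Hk. destruct (Nat.ltb_spec k t), (Nat.ltb_spec (S k) t); try lia.
      * now apply Hgs.
      * destruct (Hg k ltac:(lia)). lia.
  - rewrite Nat.add_0_r in Ht. destruct (IH t Ht) as [g [Hg Hgs]].
    exists g. split; [|exact Hgs].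
    intros k Hk. destruct (Hg k Hk). split; [lia|assumption].
Qed.

Lemma count_idx_colors_le (col : nat -> nat) (C m s n : nat) :
  (forall c, c < C -> count_idx (fun i => col i =? c) s n <= m) ->
  count_idx (fun i => col i <? C) s n <= C * m.
Proof.
  revert n. induction C as [|C IH]; intros n Hc.
  - clear Hc. induction n as [|n IHn]; simpl; [lia|].
    destruct (Nat.ltb_spec (col (s + n)) 0); lia.
  - assert (Hsplit : count_idx (fun i => col i <? S C) s n =
      count_idx (fun i => col i <? C) s n + count_idx (fun i => col i =? C) s n).
    { clear IH Hc. induction n as [|n IHn]; simpl; [reflexivity|]. rewrite IHn.
      destruct (Nat.ltb_spec (col (s + n)) (S C)), (Nat.ltb_spec (col (s + n)) C),
        (Nat.eqb_spec (col (s + n)) C); lia. }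
    rewrite Hsplit. specialize (IH n (fun c Hc' => Hc c ltac:(lia))).
    specialize (Hc C ltac:(lia)). lia.
Qed.

Lemma pigeonhole_increasing (col : nat -> nat) (C m s : nat) :
  (forall i, col i < C) ->
  exists c (g : nat -> nat),
    (forall k, k < S m -> s <= g k <= s + C * m /\ col (g k) = c) /\
    (forall k, S k < S m -> g k < g (S k)).
Proof.
  intros Hcol.
  assert (Hc : exists c, c < C /\ S m <= count_idx (fun i => col i =? c) s (S (C * m))).
  { apply NNPP. intros Hno.
    assert (Hall : count_idx (fun i => col i <? C) s (S (C * m)) = S (C * m)).
    { generalize (S (C * m)). induction n as [|n IHn]; simpl; [reflexivity|].
      rewrite IHn. specialize (Hcol (s + n)). destruct (Nat.ltb_spec (col (s + n)) C); lia. }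
    enough (count_idx (fun i => col i <? C) s (S (C * m)) <= C * m) by lia.
    apply count_idx_colors_le. intros c Hc.
    apply Nat.nlt_ge. intros Hlt. apply Hno. now exists c. }
  destruct Hc as [c [_ Hc]].
  destruct (count_idx_extract _ _ _ _ Hc) as [g [Hg Hgs]].
  exists c, g. split; [|exact Hgs].
  intros k Hk. destruct (Hg k Hk) as [Hgk Hcol']. apply Nat.eqb_eq in Hcol'.
  split; [lia|exact Hcol'].
Qed.

End Pigeonhole.

Lemma chain_increasing (p q : nat -> R) K :
  (forall i, (i < K)%nat -> p i < q i) ->
  (forall i, (S i < K)%nat -> q i < p (S i)) ->
  forall m n, (m < n < K)%nat -> q m < p n.
Proof.
  intros Hpq Hqp m n. induction n as [|n IH]; intros Hmn; [lia|].
  destruct (Nat.eq_dec m n) as [->|Hne]; [apply Hqp; lia|].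
  specialize (IH ltac:(lia)). pose proof (Hpq n ltac:(lia)). pose proof (Hqp n ltac:(lia)). lra.
Qed.

(* By induction on [k], fewer than [k (P + 1)] links start before [a + k h]. *)
Lemma chain_length_le (p q : nat -> R) (K : nat) a h (M P : nat) :
  0 < h ->
  (forall i, (i < K)%nat -> a <= p i /\ p i < q i /\ q i <= a + INR M * h) ->
  (forall i, (S i < K)%nat -> q i < p (S i)) ->
  (forall s k, (k < M)%nat -> (s + P < K)%nat ->
     ~ (forall i, (s <= i <= s + P)%nat -> a + INR k * h <= p i /\ q i <= a + INR k * h + h)) ->
  (K <= M * (P + 1))%nat.
Proof.
  intros Hh Hrange Hqp Hcell.
  assert (Hpq : forall i, (i < K)%nat -> p i < q i) by (intros i Hi; apply Hrange, Hi).
  pose proof (chain_increasing p q K Hpq Hqp) as Hinc.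
  assert (Hp_le : forall m n, (m <= n < K)%nat -> p m <= p n).
  { intros m n Hmn. destruct (Nat.eq_dec m n) as [->|Hne]; [lra|].
    pose proof (Hinc m n ltac:(lia)). pose proof (Hpq m ltac:(lia)). lra. }
  assert (Hbefore : forall k i, (i < K)%nat -> p i < a + INR k * h -> (i < k * (P + 1))%nat).
  { induction k as [|k IH]; intros i Hi Hp.
    { simpl in Hp. destruct (Hrange i Hi). lra. }
    apply Nat.nle_gt. intros Hge. set (s := (i - (P + 1))%nat).
    destruct (Rlt_dec (p s) (a + INR k * h)) as [Hs|Hs].
    { pose proof (IH s ltac:(lia) Hs). simpl in Hge. lia. }
    apply (Hcell s k).
    - destruct (Hrange s ltac:(lia)) as [_ [Hs1 Hs2]].
      apply INR_lt, Rmult_lt_reg_r with h; lra.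
    - simpl in Hge. lia.
    - intros i' Hi'. rewrite S_INR in Hp. simpl in Hge. split.
      + pose proof (Hp_le s i' ltac:(lia)). lra.
      + pose proof (Hinc i' i ltac:(lia)). lra. }
  destruct K as [|K]; [lia|].
  destruct (Hrange K ltac:(lia)) as [_ [HpK HqK]].
  pose proof (Hbefore M K ltac:(lia) ltac:(lra)). lia.
Qed.

(** * Components of a subset of the line *)

Lemma exists_longest {A : Type} (P : list A -> Prop) (B : nat) :
  (forall l, P l -> (length l <= B)%nat) -> P nil ->
  exists l, P l /\ forall l', P l' -> (length l' <= length l)%nat.
Proof.
  intros HB Hnil.
  assert (Hm : forall m, (exists l, P l /\ (B - m <= length l)%nat) ->
     exists l, P l /\ forall l', P l' -> (length l' <= length l)%nat).
  { induction m as [|m IH]; intros [l [Hl Hlen]].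
    - exists l. split; [exact Hl|]. intros l' Hl'. pose proof (HB l' Hl'). lia.
    - destruct (classic (exists l', P l' /\ (B - m <= length l')%nat)) as [Hex|Hnex].
      + now apply IH.
      + exists l. split; [exact Hl|]. intros l' Hl'.
        apply Nat.nlt_ge. intros Hlt. apply Hnex. exists l'. split; [exact Hl'|lia]. }
  apply (Hm B). exists nil. split; [exact Hnil|lia].
Qed.

Section Components.

Variable F : R -> Prop.

Definition linked (x y : R) : Prop := forall t, Rmin x y <= t <= Rmax x y -> F t.

Ltac minmax := unfold Rmin, Rmax in *; repeat destruct Rle_dec; try lra.

Lemma linked_refl x : F x -> linked x x.
Proof. intros Hx t Ht. replace t with x by minmax. exact Hx. Qed.

Lemma F_of_linked x y : linked x y -> F y.
Proof. intros H. apply H. minmax. Qed.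

Lemma linked_sym x y : linked x y -> linked y x.
Proof. intros H t Ht. apply H. minmax. Qed.

Lemma linked_trans x y z : linked x y -> linked y z -> linked x z.
Proof.
  intros Hxy Hyz t Ht.
  destruct (Rle_dec (Rmin x y) t), (Rle_dec t (Rmax x y)).
  - apply Hxy. lra.
  - apply Hyz. minmax.
  - apply Hyz. minmax.
  - minmax.
Qed.

Lemma linked_between c x y t : linked c x -> linked c y -> x <= t <= y -> linked c t.
Proof.
  intros Hx Hy Ht s Hs.
  destruct (Rle_dec c t); [apply Hy | apply Hx]; minmax.
Qed.

(* A transversal picks at most one point, in increasing order, from each component
   of [F]. *)
Definition apart (x y : R) : Prop := x < y /\ ~ linked x y.

Definition transversal (l : list R) : Prop := List.Forall F l /\ Sorted apart l.

Lemma apart_trans x y z : apart x y -> apart y z -> apart x z.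
Proof.
  intros [Hxy Hnxy] [Hyz _]. split; [lra|]. intros Hxz. apply Hnxy.
  intros t Ht. apply Hxz. minmax.
Qed.

Fixpoint insert (y : R) (l : list R) : list R :=
  match l with
  | nil => y :: nil
  | x :: l' => if Rlt_dec y x then y :: x :: l' else x :: insert y l'
  end.

Lemma insert_length y l : length (insert y l) = S (length l).
Proof. induction l as [|x l IH]; simpl; [reflexivity|]. destruct Rlt_dec; simpl; auto. Qed.

Lemma Forall_insert (P : R -> Prop) y l : P y -> List.Forall P l -> List.Forall P (insert y l).
Proof.
  intros Hy Hl. induction Hl as [|x l Hx Hl IH]; simpl; [auto|].
  destruct Rlt_dec; auto.
Qed.

Lemma Sorted_insert y l : F y -> List.Forall (fun x => ~ linked y x) l ->
  Sorted apart l -> Sorted apart (insert y l).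
Proof.
  intros Fy Hnl Hs. induction Hs as [|x l Hs IH Hhd]; simpl; [auto|].
  inversion Hnl as [|? ? Hyx Hnl']; subst.
  destruct Rlt_dec as [Hlt|Hge].
  - constructor; [now constructor|]. constructor. now split.
  - constructor; [now apply IH|].
    assert (Hxy : apart x y).
    { split.
      - destruct (Req_dec x y) as [->|Hne]; [now destruct Hyx; apply linked_refl|lra].
      - intros H. now apply Hyx, linked_sym. }
    destruct l as [|w l]; simpl; [now constructor|].
    destruct Rlt_dec; constructor; [exact Hxy|now inversion Hhd].
Qed.

Lemma transversal_longest_covers l :
  transversal l -> (forall l', transversal l' -> (length l' <= length l)%nat) ->
  forall y, F y -> exists i, (i < length l)%nat /\ linked (nth i l 0) y.
Proof.
  intros [Hf Hs] Hmax y Fy.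
  destruct (classic (exists x, In x l /\ linked x y)) as [[x [Hin Hxy]]|Hno].
  - destruct (In_nth l x 0 Hin) as [i [Hi Hx]]. exists i. now rewrite Hx.
  - assert (Hins : transversal (insert y l)).
    { split; [now apply Forall_insert|]. apply Sorted_insert; [exact Fy| |exact Hs].
      apply Forall_forall. intros x Hx Hyx. apply Hno. exists x. split; [exact Hx|].
      now apply linked_sym. }
    pose proof (Hmax _ Hins) as Hlen. rewrite insert_length in Hlen. lia.
Qed.

Lemma transversal_not_linked l : transversal l ->
  forall i j, (i < j < length l)%nat -> ~ linked (nth i l 0) (nth j l 0).
Proof.
  intros [_ Hs]. apply Sorted_StronglySorted in Hs; [|exact apart_trans].
  induction Hs as [|x l Hs IH Hall]; intros i j Hij; simpl in Hij; [lia|].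
  destruct i as [|i], j as [|j]; try lia; simpl.
  - rewrite Forall_forall in Hall. apply Hall, nth_In. lia.
  - apply IH. lia.
Qed.

Variables (P Q : R -> Prop) (b : R).
Hypothesis F_le : forall y, F y -> y <= b.
Hypothesis apart_crossing : forall x y, F x -> F y -> apart x y ->
  exists p q, x < p /\ p < q /\ q <= y /\ P p /\ Q q.

Lemma transversal_chain l x : transversal (x :: l) ->
  exists p q : nat -> R,
    (forall i, (i < length l)%nat -> x < p i /\ p i < q i /\ q i <= b /\ P (p i) /\ Q (q i)) /\
    (forall i, (S i < length l)%nat -> q i < p (S i)).
Proof.
  revert x. induction l as [|y l IH]; intros x [Hf Hs].
  { exists (fun _ => 0), (fun _ => 0). split; intros i Hi; simpl in Hi; lia. }
  apply Sorted_inv in Hs as [Hs Hhd]. apply HdRel_inv in Hhd.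
  inversion Hf as [|? ? Fx Hf']; subst. inversion Hf' as [|? ? Fy _]; subst.
  destruct (IH y (conj Hf' Hs)) as [p [q [Hpq Hqp]]].
  destruct (apart_crossing x y Fx Fy Hhd) as [p0 [q0 [H1 [H2 [H3 [H4 H5]]]]]].
  destruct Hhd as [Hxy _].
  exists (fun i => match i with O => p0 | S i => p i end),
         (fun i => match i with O => q0 | S i => q i end). split.
  - intros [|i] Hi.
    + pose proof (F_le y Fy). repeat split; auto; lra.
    + simpl in Hi. destruct (Hpq i ltac:(lia)) as [A1 [A2 [A3 [A4 A5]]]].
      repeat split; auto; lra.
  - intros [|i] Hi.
    + simpl in Hi. destruct (Hpq O ltac:(lia)). lra.
    + apply Hqp. simpl in Hi. lia.
Qed.

End Components.

(** * Functions on a compact interval *)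

Lemma filterlim_within_eps (P : R -> Prop) (f : R -> R) x l :
  filterlim f (within P (locally x)) (locally l) ->
  forall eps, 0 < eps -> exists d, 0 < d /\
    forall y, P y -> Rabs (y - x) < d -> Rabs (f y - l) < eps.
Proof.
  intros H eps He.
  destruct (proj1 (filterlim_locally f l) H (mkposreal eps He)) as [d Hd].
  exists d. split; [apply cond_pos|]. intros y Py Hy. now apply (Hd y).
Qed.

Lemma has_derive_on_continuous a b f f' :
  has_derive_on a b f f' -> continuous_on_I a b f.
Proof.
  intros Hd x Hx. apply filterlim_locally. intros eps.
  destruct (filterlim_within_eps _ _ _ _ (Hd x Hx) 1 Rlt_0_1) as [d [Hd0 Hq]].
  set (K := Rabs (f' x) + 1).
  assert (HK : 0 < K) by (pose proof (Rabs_pos (f' x)); unfold K; lra).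
  assert (Hdelta : 0 < Rmin d (eps / K))
    by (apply Rmin_pos; [lra|apply Rdiv_lt_0_compat, HK; apply cond_pos]).
  exists (mkposreal _ Hdelta). intros y Hy HIy. change (Rabs (y - x) < Rmin d (eps / K)) in Hy.
  change (Rabs (f y - f x) < eps).
  destruct (Req_dec y x) as [->|Hyx]; [rewrite Rminus_diag, Rabs_R0; apply cond_pos|].
  pose proof (Rmin_l d (eps / K)). pose proof (Rmin_r d (eps / K)).
  specialize (Hq y (conj HIy Hyx) ltac:(lra)).
  assert (HqK : Rabs ((f y - f x) / (y - x)) < K).
  { pose proof (Rabs_triang_inv ((f y - f x) / (y - x)) (f' x)). unfold K. lra. }
  replace (f y - f x) with ((f y - f x) / (y - x) * (y - x)) by (field; lra).
  rewrite Rabs_mult. apply Rle_lt_trans with (K * Rabs (y - x)).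
  - apply Rmult_le_compat_r; [apply Rabs_pos|lra].
  - replace (pos eps) with (K * (eps / K)) by (field; lra).
    apply Rmult_lt_compat_l; lra.
Qed.

Definition clamp (a b x : R) : R := Rmax a (Rmin b x).

Lemma clamp_inI a b x : a <= b -> inI a b (clamp a b x).
Proof. unfold clamp, inI, Rmax, Rmin. repeat destruct Rle_dec; lra. Qed.

Lemma clamp_id a b x : inI a b x -> clamp a b x = x.
Proof. unfold clamp, inI, Rmax, Rmin. repeat destruct Rle_dec; lra. Qed.

Lemma clamp_dist a b x y : Rabs (clamp a b x - clamp a b y) <= Rabs (x - y).
Proof.
  unfold clamp, Rmax, Rmin. repeat destruct Rle_dec; unfold Rabs; repeat destruct Rcase_abs; lra.
Qed.

Lemma continuity_pt_clamp a b f x : a <= b -> continuous_on_I a b f ->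
  continuity_pt (fun t => f (clamp a b t)) x.
Proof.
  intros Hab Hf. apply continuity_pt_filterlim, filterlim_locally. intros eps.
  destruct (filterlim_within_eps _ _ _ _ (Hf _ (clamp_inI a b x Hab)) eps (cond_pos eps))
    as [d [Hd0 Hd]].
  exists (mkposreal _ Hd0). intros y Hy. apply Hd; [now apply clamp_inI|].
  pose proof (clamp_dist a b y x). change (Rabs (y - x) < d) in Hy. lra.
Qed.

Lemma derivable_pt_lim_clamp a b f f' x : has_derive_on a b f f' -> a < x < b ->
  derivable_pt_lim (fun t => f (clamp a b t)) x (f' x).
Proof.
  intros Hd Hx eps Heps.
  assert (HIx : inI a b x) by (unfold inI; lra).
  destruct (filterlim_within_eps _ _ _ _ (Hd x HIx) eps Heps) as [d [Hd0 Hdd]].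
  assert (Hpos : 0 < Rmin d (Rmin (x - a) (b - x))) by (repeat apply Rmin_pos; lra).
  exists (mkposreal _ Hpos). intros h Hh0 Hh. cbn [pos] in Hh.
  pose proof (Rmin_l d (Rmin (x - a) (b - x))). pose proof (Rmin_r d (Rmin (x - a) (b - x))).
  pose proof (Rmin_l (x - a) (b - x)). pose proof (Rmin_r (x - a) (b - x)).
  assert (Hxh : inI a b (x + h)) by (apply Rabs_lt_between in Hh; unfold inI; lra).
  rewrite (clamp_id _ _ _ HIx), (clamp_id _ _ _ Hxh).
  assert (Hxh' : x + h <> x) by (contradict Hh0; lra).
  specialize (Hdd (x + h) (conj Hxh Hxh')).
  replace (x + h - x) with h in Hdd by ring. apply Hdd. lra.
Qed.

Lemma sup_norm_ext a b f g : (forall x, inI a b x -> f x = g x) ->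
  sup_norm a b f = sup_norm a b g.
Proof.
  intros Hfg. unfold sup_norm. f_equal. apply Lub_Rbar_eqset. intros y.
  split; intros [x [Hx ->]]; exists x; rewrite (Hfg x Hx); auto.
Qed.

Lemma sup_norm_ge a b g x : a <= b -> (forall y, continuity_pt g y) -> inI a b x ->
  Rabs (g x) <= sup_norm a b g.
Proof.
  intros Hab Hg Hx.
  destruct (continuity_ab_maj (fun t => Rabs (g t)) a b Hab) as [xM [HM _]].
  { intros t _. apply (continuity_pt_comp g Rabs); [apply Hg|apply Rcontinuity_abs]. }
  unfold sup_norm.
  set (S := fun y => exists x, inI a b x /\ y = Rabs (g x)).
  destruct (Lub_Rbar_correct S) as [Hub Hlub].
  assert (HSx : S (Rabs (g x))) by (now exists x).
  destruct (Lub_Rbar S) as [l| |] eqn:El; simpl.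
  - exact (Hub _ HSx).
  - exfalso. apply (Hlub (Finite (Rabs (g xM)))). intros y [z [Hz ->]]. simpl. now apply HM.
  - destruct (Hub _ HSx).
Qed.

Lemma continuity_pt_stays_between (g : R -> R) s al be :
  continuity_pt g s -> al < g s < be ->
  exists d, 0 < d /\ forall t, Rabs (t - s) < d -> al < g t < be.
Proof.
  intros Hg Hs.
  assert (He : 0 < Rmin (g s - al) (be - g s)) by (apply Rmin_pos; lra).
  destruct (Hg _ He) as [d [Hd Hdd]]. exists d. split; [exact Hd|]. intros t Ht.
  destruct (Req_dec t s) as [->|Hts]; [exact Hs|].
  specialize (Hdd t (conj (conj I (not_eq_sym Hts)) Ht)). simpl in Hdd. unfold R_dist in Hdd.
  pose proof (Rmin_l (g s - al) (be - g s)). pose proof (Rmin_r (g s - al) (be - g s)).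
  apply Rabs_lt_between in Hdd. lra.
Qed.

(* [s] is the supremum of the exit points: continuity puts [g s] outside the open
   band, and the intermediate value theorem on [s, x] puts it on the boundary. *)
Lemma last_exit (g : R -> R) u x al be :
  (forall t, continuity_pt g t) -> u <= x -> al < g x < be ->
  (exists t, u <= t <= x /\ ~ (al < g t < be)) ->
  exists s, u <= s <= x /\ (g s = al \/ g s = be) /\ forall t, s < t <= x -> al < g t < be.
Proof.
  intros Hg Hux Hgx Hex.
  set (A := fun t => u <= t <= x /\ ~ (al < g t < be)).
  assert (Hb : bound A) by (exists x; intros t [Ht _]; lra).
  destruct (completeness A Hb Hex) as [s [Hub Hlub]].
  destruct Hex as [t0 Ht0].
  assert (Hus : u <= s) by (pose proof (Hub t0 Ht0); destruct Ht0; lra).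
  assert (Hsx : s <= x) by (apply Hlub; intros t [Ht _]; lra).
  assert (Hafter : forall t, s < t <= x -> al < g t < be).
  { intros t Ht. apply NNPP. intros Hout.
    assert (Ht' : u <= t <= x) by lra. pose proof (Hub t (conj Ht' Hout)). lra. }
  assert (Hout : ~ (al < g s < be)).
  { intros Hin. destruct (continuity_pt_stays_between g s al be (Hg s) Hin) as [d [Hd Hdd]].
    enough (s <= s - d / 2) by lra. apply Hlub. intros t [Ht Hnt].
    pose proof (Hub t (conj Ht Hnt)). apply Rnot_lt_le. intros Hlt.
    apply Hnt, Hdd, Rabs_lt_between. lra. }
  assert (Hsx' : s < x) by (destruct (Req_dec s x) as [->|]; [contradiction|lra]).
  exists s. split; [lra|]. split; [|exact Hafter].
  assert (Hhit : forall y, Rmin (g s) (g x) <= y <= Rmax (g s) (g x) -> g s = y \/ al < y < be).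
  { intros y Hy. destruct (IVT_gen g s x y Hg Hy) as [z [Hz <-]].
    rewrite Rmin_left, Rmax_right in Hz by lra.
    destruct (Rle_lt_or_eq_dec s z (proj1 Hz)) as [Hsz| ->]; [|now left].
    right. apply Hafter. lra. }
  destruct (Rle_dec (g s) al).
  - left. destruct (Hhit al) as [->|Hin]; [|reflexivity|lra].
    rewrite Rmin_left, Rmax_right; lra.
  - right. destruct (Hhit be) as [->|Hin]; [|reflexivity|lra].
    rewrite Rmin_right, Rmax_left; lra.
Qed.

(** * Dyadic levels *)

Lemma powerRZ2_pos j : 0 < powerRZ 2 j.
Proof. apply powerRZ_lt. lra. Qed.

Lemma powerRZ2_succ j : powerRZ 2 (j + 1) = 2 * powerRZ 2 j.
Proof. rewrite powerRZ_add by lra. simpl. ring. Qed.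

Lemma powerRZ2_double_le j j' : (j < j')%Z -> 2 * powerRZ 2 j <= powerRZ 2 j'.
Proof.
  intros H. rewrite <- powerRZ2_succ, !powerRZ_Rpower by lra.
  apply Rle_Rpower; [lra|]. apply IZR_le. lia.
Qed.

Lemma dyadic_floor y : 0 < y -> exists k, powerRZ 2 k <= y < powerRZ 2 (k + 1).
Proof.
  intros Hy.
  assert (Hl2 : 0 < ln 2) by (rewrite <- ln_1; apply ln_increasing; lra).
  set (t := ln y / ln 2). destruct (archimed t) as [Hup1 Hup2].
  assert (Hyt : y = Rpower 2 t).
  { unfold Rpower, t. rewrite <- (exp_ln y Hy) at 1. f_equal. field. lra. }
  exists (up t - 1)%Z. rewrite !powerRZ_Rpower, Hyt by lra.
  replace (up t - 1 + 1)%Z with (up t) by ring. rewrite minus_IZR.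
  split; [apply Rle_Rpower | apply Rpower_lt]; lra.
Qed.

Section Levels.

Variables (a b : R) (g : R -> R).
Hypothesis g_cont : forall x, continuity_pt g x.

(* The anchor [s] is where [|g|] last equalled [mu] (or [a], if [|g a| >= mu]).
   Of two anchors for [x], the later lies in the window of the earlier, which
   forces the two levels to be within a factor 2 of each other. *)
Definition at_level (mu x : R) : Prop :=
  inI a b x /\ exists s, a <= s <= x /\ (Rabs (g s) = mu \/ (s = a /\ mu <= Rabs (g a))) /\
    forall t, s <= t <= x -> mu / 2 < Rabs (g t) < 2 * mu.

Lemma at_level_inI mu x : at_level mu x -> inI a b x.
Proof. now intros [Hx _]. Qed.

Lemma at_level_band mu x : at_level mu x -> mu / 2 < Rabs (g x) < 2 * mu.
Proof. intros [_ [s [Hs [_ Hband]]]]. apply Hband. lra. Qed.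

Lemma at_level_attained mu x : at_level mu x -> exists s, inI a b s /\ mu <= Rabs (g s).
Proof.
  intros [Hx [s [Hs [Hs1 _]]]]. unfold inI in Hx.
  destruct Hs1 as [Hs1|[-> Hs1]]; [exists s|exists a]; split; unfold inI; lra.
Qed.

Lemma at_level_unique mu mu' x : 0 < mu -> 2 * mu <= mu' ->
  at_level mu x -> at_level mu' x -> False.
Proof.
  intros Hmu Hle [_ [s [Hs [Hs1 Hs2]]]] [_ [s' [Hs' [Hs1' Hs2']]]].
  destruct (Rle_dec s s').
  - pose proof (Hs2 s' ltac:(lra)). destruct Hs1' as [Hv|[-> Hv]]; lra.
  - pose proof (Hs2' s ltac:(lra)). destruct Hs1 as [Hv|[-> Hv]]; lra.
Qed.

Lemma at_level_dyadic_unique j j' x :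
  at_level (powerRZ 2 j) x -> at_level (powerRZ 2 j') x -> j = j'.
Proof.
  intros H H'. destruct (Z.lt_total j j') as [Hlt|[Heq|Hgt]]; [exfalso| exact Heq| exfalso].
  - exact (at_level_unique _ _ x (powerRZ2_pos j) (powerRZ2_double_le _ _ Hlt) H H').
  - exact (at_level_unique _ _ x (powerRZ2_pos j') (powerRZ2_double_le _ _ Hgt) H' H).
Qed.

Lemma at_level_or_double mu x : inI a b x -> 0 < mu -> mu <= Rabs (g x) < 2 * mu ->
  at_level mu x \/ at_level (2 * mu) x.
Proof.
  intros Hx Hmu Hgx. pose proof Hx as [Hax Hxb].
  destruct (Rle_lt_or_eq_dec _ _ (proj1 Hgx)) as [Hlt|Heq].
  2:{ left. split; [exact Hx|]. exists x. split; [lra|]. split; [now left|].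
      intros t Ht. replace t with x by lra. lra. }
  destruct (classic (exists t, a <= t <= x /\ ~ (mu < Rabs (g t) < 2 * mu))) as [Hexit|Hstay].
  - destruct (last_exit (fun t => Rabs (g t)) a x mu (2 * mu)) as [s [Hs [Hgs Hafter]]];
      [intros t; apply (continuity_pt_comp g Rabs); [apply g_cont|apply Rcontinuity_abs]
      |lra|lra|exact Hexit|].
    destruct Hgs as [Hgs|Hgs]; [left|right]; split; try exact Hx;
      exists s; (split; [exact Hs|]); (split; [now left|]); intros t Ht;
      (destruct (Rle_lt_or_eq_dec s t (proj1 Ht)) as [Hst| <-]; [|lra]);
      pose proof (Hafter t ltac:(lra)); lra.
  - left. split; [exact Hx|]. exists a. split; [lra|].
    assert (Hin : forall t, a <= t <= x -> mu < Rabs (g t) < 2 * mu).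
    { intros t Ht. apply NNPP. intros Hout. apply Hstay. now exists t. }
    split.
    + right. split; [reflexivity|]. pose proof (Hin a ltac:(lra)). lra.
    + intros t Ht. pose proof (Hin t Ht). lra.
Qed.

Lemma at_level_exists x : inI a b x -> g x <> 0 -> exists j, at_level (powerRZ 2 j) x.
Proof.
  intros Hx Hgx.
  destruct (dyadic_floor (Rabs (g x))) as [k Hk]; [now apply Rabs_pos_lt|].
  rewrite powerRZ2_succ in Hk.
  destruct (at_level_or_double (powerRZ 2 k) x Hx (powerRZ2_pos k) Hk); [now exists k|].
  exists (k + 1)%Z. now rewrite powerRZ2_succ.
Qed.

Definition off_band (mu p : R) : Prop := inI a b p /\ ~ (mu / 2 < Rabs (g p) < 2 * mu).

Definition on_level (mu q : R) : Prop := inI a b q /\ Rabs (g q) = mu.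

Lemma at_level_apart mu x y : at_level mu x -> at_level mu y -> x < y ->
  ~ linked (at_level mu) x y ->
  exists p q, x < p /\ p < q /\ q <= y /\ off_band mu p /\ on_level mu q.
Proof.
  intros Hx Hy Hxy Hnl.
  destruct (classic (exists t, x <= t <= y /\ ~ at_level mu t)) as [[t [Ht Hnt]]|Hall].
  2:{ exfalso. apply Hnl. intros t Ht. rewrite Rmin_left, Rmax_right in Ht by lra.
      apply NNPP. intros Hnt. apply Hall. now exists t. }
  destruct Hx as [HIx [s [Hs [Hs1 Hs2]]]], Hy as [HIy [s' [Hs' [Hs1' Hs2']]]].
  assert (HIt : inI a b t) by (unfold inI in *; lra).
  destruct (classic (exists p, x < p <= t /\ ~ (mu / 2 < Rabs (g p) < 2 * mu)))
    as [[p [Hp Hpn]]|Hnp].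
  2:{ exfalso. apply Hnt. split; [exact HIt|]. exists s. split; [lra|]. split; [exact Hs1|].
      intros u Hu. destruct (Rle_dec u x); [apply Hs2; lra|].
      apply NNPP. intros Hout. apply Hnp. exists u. split; [lra|exact Hout]. }
  destruct (Rle_dec s' t) as [Hst|Hst].
  { exfalso. apply Hnt. split; [exact HIt|]. exists s'. split; [lra|]. split; [exact Hs1'|].
    intros u Hu. apply Hs2'. lra. }
  destruct Hs1' as [Hq|[Hq _]]; [|unfold inI in HIt; lra].
  exists p, s'. unfold off_band, on_level, inI in *. repeat split; try lra; assumption.
Qed.

End Levels.

(** * The decomposition *)

Definition level_value (mu : R) (c : nat) : R :=
  match c with
  | O => 3 * mu / 4
  | 1%nat => 3 * mu / 2
  | 2%nat => - (3 * mu / 4)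
  | _ => - (3 * mu / 2)
  end.

(* For [|P|] outside [(mu/2, 2 mu)] and [|Q| = mu], one of the four levels
   [±3mu/4, ±3mu/2] lies strictly between [P] and [Q], at distance [>= mu/4] from [P]. *)
Definition crossed_level (mu P Q : R) : nat :=
  if Rlt_dec 0 Q then (if Rlt_dec P mu then O else 1%nat)
  else (if Rlt_dec (- mu) P then 2%nat else 3%nat).

Lemma crossed_level_lt mu P Q : (crossed_level mu P Q < 4)%nat.
Proof. unfold crossed_level. repeat destruct Rlt_dec; lia. Qed.

Lemma crossed_level_spec mu P Q : 0 < mu ->
  ~ (mu / 2 < Rabs P < 2 * mu) -> Rabs Q = mu ->
  let L := level_value mu (crossed_level mu P Q) in
  (P - L) * (Q - L) < 0 /\ mu / 4 <= Rabs (P - L).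
Proof.
  intros Hmu HP HQ L. subst L.
  assert (HQ' : Q = mu \/ Q = - mu) by (unfold Rabs in HQ; destruct Rcase_abs; lra).
  assert (HP' : - (mu / 2) <= P <= mu / 2 \/ 2 * mu <= P \/ P <= - (2 * mu))
    by (unfold Rabs in HP; destruct Rcase_abs; lra).
  unfold crossed_level. destruct HQ' as [-> | ->]; destruct HP' as [HP'|[HP'|HP']];
    repeat destruct Rlt_dec; simpl; try lra; split; try nra; unfold Rabs; destruct Rcase_abs; lra.
Qed.

Lemma rroot_pow r x : (1 <= r)%nat -> 0 <= x -> rroot r x ^ r = x.
Proof.
  intros Hr Hx. unfold rroot. destruct Rlt_dec as [Hpos|Hpos].
  - assert (0 < INR r) by (apply lt_0_INR; lia).
    rewrite <- Rpower_pow by apply exp_pos.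
    rewrite Rpower_mult, Rinv_l, Rpower_1; lra.
  - replace x with 0 by lra. apply pow_i. lia.
Qed.

Lemma Rpower_opp_inv_pow r mu : (1 <= r)%nat -> 0 < mu -> Rpower mu (- / INR r) ^ r = / mu.
Proof.
  intros Hr Hmu. assert (0 < INR r) by (apply lt_0_INR; lia).
  rewrite <- Rpower_pow by apply exp_pos.
  rewrite Rpower_mult. replace (- / INR r * INR r) with (Ropp 1) by (field; lra).
  rewrite Rpower_Ropp, Rpower_1; lra.
Qed.

Section Decomposition.

Variables (a b : R) (r : nat) (phi : R -> R) (D : nat -> R -> R).
Hypothesis Hab : a < b.
Hypothesis Hr : (1 <= r)%nat.
Hypothesis HC : is_Cr a b r phi D.

(* Extending each [D k] constantly outside [a, b] makes it continuous on all of
   [R], as Rolle's, the mean value and the intermediate value theorems of the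
   standard library require. *)
Definition Dext (k : nat) (x : R) : R := D k (clamp a b x).

Definition Phi : R -> R := Dext 0.

Definition Cr : R := sup_norm a b (D r).

Lemma D_continuous k : (k <= r)%nat -> continuous_on_I a b (D k).
Proof.
  intros Hk. destruct HC as [_ [Hder Hcont]].
  destruct (Nat.eq_dec k r) as [->|Hne]; [exact Hcont|].
  apply has_derive_on_continuous with (D (S k)). apply Hder. lia.
Qed.

Lemma Dext_continuous k x : (k <= r)%nat -> continuity_pt (Dext k) x.
Proof. intros Hk. apply continuity_pt_clamp; [lra|now apply D_continuous]. Qed.

Lemma Dext_derive k x : (k < r)%nat -> a < x < b -> derivable_pt_lim (Dext k) x (Dext (S k) x).
Proof.
  intros Hk Hx. unfold Dext at 2. rewrite clamp_id by (unfold inI; lra).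
  apply derivable_pt_lim_clamp; [|exact Hx]. destruct HC as [_ [Hder _]]. now apply Hder.
Qed.

Lemma Phi_continuous x : continuity_pt Phi x.
Proof. apply Dext_continuous. lia. Qed.

Lemma Phi_minus_continuous L x : continuity_pt (fun t => Phi t - L) x.
Proof.
  apply continuity_pt_minus; [apply Phi_continuous|apply continuity_pt_const; now intros ? ?].
Qed.

Lemma Phi_eq x : inI a b x -> Phi x = phi x.
Proof.
  intros Hx. unfold Phi, Dext. rewrite clamp_id by exact Hx. destruct HC as [H0 _]. now apply H0.
Qed.

Lemma Phi_le_sup x : inI a b x -> Rabs (Phi x) <= sup_norm a b phi.
Proof.
  intros Hx. rewrite (sup_norm_ext a b phi Phi) by (intros y Hy; symmetry; now apply Phi_eq).
  apply sup_norm_ge; [lra|exact Phi_continuous|exact Hx].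
Qed.

Lemma Dext_r_le x : inI a b x -> Rabs (Dext r x) <= Cr.
Proof.
  unfold Cr. rewrite (sup_norm_ext a b (D r) (Dext r))
    by (intros y Hy; unfold Dext; now rewrite clamp_id).
  apply sup_norm_ge; [lra|intros y; now apply Dext_continuous].
Qed.

Lemma Cr_nonneg : 0 <= Cr.
Proof. eapply Rle_trans; [apply Rabs_pos|apply (Dext_r_le a); unfold inI; lra]. Qed.

Lemma Phi_bound_from_level_zeros L u v (z : nat -> R) :
  a <= u -> v <= b ->
  (forall k, (k < r)%nat -> u <= z k <= v /\ Phi (z k) = L) ->
  (forall k, (S k < r)%nat -> z k < z (S k)) ->
  forall x, u <= x <= v -> Rabs (Phi x - L) <= Cr * (v - u) ^ r.
Proof.
  intros Hau Hvb Hz Hzs.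
  apply (bound_from_zeros r
    (fun i => if (i =? 0)%nat then fun t => Phi t - L else Dext i) u v Cr z).
  - intros [|i] x Hi; simpl; [apply Phi_minus_continuous|apply Dext_continuous; lia].
  - intros [|i] x Hi Hx; simpl.
    + rewrite <- (Rminus_0_r (Dext 1 x)).
      apply derivable_pt_lim_minus; [apply Dext_derive; [lia|lra]|apply derivable_pt_lim_const].
    + apply Dext_derive; [lia|lra].
  - intros x Hx. replace (r =? 0)%nat with false by (symmetry; apply Nat.eqb_neq; lia).
    apply Dext_r_le. unfold inI. lra.
  - intros k Hk. destruct (Hz k Hk) as [Hzk HPhi]. split; [exact Hzk|]. simpl. lra.
  - exact Hzs.
Qed.

Lemma level_crossing_zero L p q : p < q -> (Phi p - L) * (Phi q - L) < 0 ->
  exists z, p < z < q /\ Phi z = L.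
Proof.
  intros Hpq Hsign.
  destruct (IVT_cor (fun t => Phi t - L) p q) as [z [Hz HzL]]; [|lra|lra|].
  - intros t. apply Phi_minus_continuous.
  - exists z. simpl in HzL.
    destruct (Req_dec z p) as [->|Hzp]; [rewrite HzL in Hsign; lra|].
    destruct (Req_dec z q) as [->|Hzq]; [rewrite HzL in Hsign; lra|].
    split; lra.
Qed.

Lemma Phi_bound_from_crossings L u v (p q : nat -> R) :
  a <= u -> v <= b ->
  (forall k, (k < r)%nat ->
     u <= p k /\ p k < q k /\ q k <= v /\ (Phi (p k) - L) * (Phi (q k) - L) < 0) ->
  (forall k, (S k < r)%nat -> q k < p (S k)) ->
  forall x, u <= x <= v -> Rabs (Phi x - L) <= Cr * (v - u) ^ r.
Proof.
  intros Hau Hvb Hcross Hqp.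
  assert (Hz : forall k, exists z, (k < r)%nat -> p k < z < q k /\ Phi z = L).
  { intros k. destruct (Nat.lt_ge_cases k r) as [Hk|Hk]; [|exists 0; intros; lia].
    destruct (Hcross k Hk) as [_ [Hpq [_ Hsign]]].
    destruct (level_crossing_zero L (p k) (q k) Hpq Hsign) as [z Hz].
    now exists z. }
  destruct (choice _ Hz) as [z Hzk].
  apply (Phi_bound_from_level_zeros L u v z Hau Hvb).
  - intros k Hk. destruct (Hzk k Hk) as [Hzpq HzL], (Hcross k Hk) as [Hup [_ [Hqv _]]].
    split; [lra|exact HzL].
  - intros k Hk. destruct (Hzk k ltac:(lia)) as [[_ Hzq] _], (Hzk (S k) Hk) as [[Hpz _] _].
    specialize (Hqp k Hk). lra.
Qed.

(* Some level is crossed [r] times, so [Phi - L] has [r] zeros in [u, v] and is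
   smaller than [mu/4] there; but it is at least [mu/4] at the start of a crossing. *)
Lemma no_dense_crossings mu u v (p q : nat -> R) K s :
  0 < mu -> a <= u -> v <= b -> Cr * (v - u) ^ r < mu / 4 ->
  (forall i, (i < K)%nat ->
     p i < q i /\ off_band a b Phi mu (p i) /\ on_level a b Phi mu (q i)) ->
  (forall i, (S i < K)%nat -> q i < p (S i)) ->
  (s + 4 * (r - 1) < K)%nat ->
  ~ (forall i, (s <= i <= s + 4 * (r - 1))%nat -> u <= p i /\ q i <= v).
Proof.
  intros Hmu Hau Hvb Hsmall Hchain Hqp HK Hcell.
  set (col := fun i => crossed_level mu (Phi (p i)) (Phi (q i))).
  destruct (pigeonhole_increasing col 4 (r - 1) s (fun i => crossed_level_lt _ _ _))
    as [c [g [Hg Hgs]]].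
  replace (S (r - 1)) with r in Hg, Hgs by lia.
  set (L := level_value mu c).
  assert (Hpq : forall i, (i < K)%nat -> p i < q i) by (intros i Hi; apply Hchain, Hi).
  assert (Hcross : forall k, (k < r)%nat ->
            (Phi (p (g k)) - L) * (Phi (q (g k)) - L) < 0 /\ mu / 4 <= Rabs (Phi (p (g k)) - L)).
  { intros k Hk. destruct (Hg k Hk) as [Hgk Hcol].
    destruct (Hchain (g k) ltac:(lia)) as [_ [[_ Hoff] [_ Hon]]].
    unfold L. rewrite <- Hcol. now apply crossed_level_spec. }
  destruct (Hg O ltac:(lia)) as [Hg0 _], (Hcell (g O) ltac:(lia)) as [Hu0 Hv0].
  pose proof (Hpq (g O) ltac:(lia)). destruct (Hcross O ltac:(lia)) as [_ Hfar].
  enough (Rabs (Phi (p (g O)) - L) <= Cr * (v - u) ^ r) by lra.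
  apply (Phi_bound_from_crossings L u v (fun k => p (g k)) (fun k => q (g k)) Hau Hvb); [| |lra].
  - intros k Hk. destruct (Hg k Hk) as [Hgk _], (Hcell (g k) ltac:(lia)).
    pose proof (Hpq (g k) ltac:(lia)). repeat split; try lra. now apply Hcross.
  - intros k Hk. destruct (Hg (S k) Hk) as [HgSk _]. specialize (Hgs k Hk).
    apply (chain_increasing p q K Hpq Hqp). lia.
Qed.

(* [r_factor ^ r >= 4] makes the cells short enough for [no_dense_crossings], and
   [r_factor * (4 r - 3) <= 10 r] yields the constant of the theorem. *)
Definition r_factor : R := if (r =? 1)%nat then 4 else 2.

Lemma r_factor_spec : 0 < r_factor /\ 4 <= r_factor ^ r /\ r_factor * (4 * INR r - 3) <= 10 * INR r.
Proof.
  unfold r_factor. destruct (Nat.eqb_spec r 1) as [->|Hne].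
  - simpl. lra.
  - assert (H2 : (2 <= r)%nat) by lia. pose proof (le_INR _ _ H2) as H2'. simpl in H2'.
    split; [lra|]. split; [|lra].
    replace 4 with (2 ^ 2) by (simpl; lra). now apply Rle_pow; [lra|].
Qed.

Definition length_ratio (mu : R) : R := (b - a) * rroot r Cr * Rpower mu (- / INR r).

Lemma length_ratio_nonneg mu : 0 <= length_ratio mu.
Proof.
  unfold length_ratio, rroot. apply Rmult_le_pos; [apply Rmult_le_pos; [lra|]|].
  - destruct Rlt_dec; [apply Rlt_le, exp_pos|lra].
  - apply Rlt_le, exp_pos.
Qed.

Definition ncells (mu : R) : nat := Z.to_nat (up (r_factor * length_ratio mu)).

Lemma ncells_spec mu :
  r_factor * length_ratio mu < INR (ncells mu) <= r_factor * length_ratio mu + 1.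
Proof.
  unfold ncells. destruct (archimed (r_factor * length_ratio mu)) as [Hup1 Hup2].
  assert (H0 : 0 <= r_factor * length_ratio mu)
    by (apply Rmult_le_pos; [apply Rlt_le, r_factor_spec|apply length_ratio_nonneg]).
  rewrite INR_IZR_INZ, Z2Nat.id by (apply le_IZR; simpl; lra). lra.
Qed.

Lemma cell_small mu : 0 < mu -> Cr * ((b - a) / INR (ncells mu)) ^ r < mu / 4.
Proof.
  intros Hmu. destruct (ncells_spec mu) as [HM _]. destruct r_factor_spec as [Hs0 [Hs4 _]].
  pose proof (length_ratio_nonneg mu) as HX.
  assert (HM0 : 0 < INR (ncells mu)) by nra.
  set (h := (b - a) / INR (ncells mu)).
  assert (Hh : 0 < h) by (unfold h; apply Rdiv_lt_0_compat; lra).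
  set (Y := rroot r Cr * Rpower mu (- / INR r)).
  assert (HY : 0 <= Y).
  { unfold Y, rroot. apply Rmult_le_pos; [destruct Rlt_dec; [apply Rlt_le, exp_pos|lra]|].
    apply Rlt_le, exp_pos. }
  assert (HYr : Y ^ r = Cr / mu).
  { unfold Y. rewrite Rpow_mult_distr, rroot_pow, Rpower_opp_inv_pow by (auto using Cr_nonneg).
    unfold Rdiv. reflexivity. }
  set (t := r_factor * h * Y).
  assert (Ht : 0 <= t < 1).
  { unfold t. split; [apply Rmult_le_pos; [apply Rmult_le_pos|]; lra|]. unfold h.
    apply Rmult_lt_reg_r with (INR (ncells mu)); [exact HM0|].
    replace (r_factor * ((b - a) / INR (ncells mu)) * Y * INR (ncells mu))
      with (r_factor * length_ratio mu) by (unfold length_ratio, Y; field; lra).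
    lra. }
  destruct (pow_lt_1_compat t r Ht ltac:(lia)) as [_ Htr].
  unfold t in Htr. rewrite !Rpow_mult_distr, HYr in Htr.
  assert (Hhr : 0 <= Cr * h ^ r) by (apply Rmult_le_pos; [apply Cr_nonneg|apply pow_le; lra]).
  assert (Hk : r_factor ^ r * (Cr * h ^ r) < mu).
  { apply Rmult_lt_reg_r with (/ mu); [now apply Rinv_0_lt_compat|]. rewrite Rinv_r by lra.
    replace (r_factor ^ r * (Cr * h ^ r) * / mu) with (r_factor ^ r * h ^ r * (Cr / mu))
      by (field; lra).
    exact Htr. }
  nra.
Qed.

Lemma transversal_length_le mu l : 0 < mu -> transversal (at_level a b Phi mu) l ->
  (length l <= ncells mu * (4 * (r - 1) + 1) + 1)%nat.
Proof.
  intros Hmu. destruct l as [|x l]; [intros; apply Nat.le_0_l|]. intros Htr.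
  destruct (transversal_chain (at_level a b Phi mu) (off_band a b Phi mu) (on_level a b Phi mu) b
    (fun y Hy => proj2 (at_level_inI a b Phi mu y Hy))
    (fun x y Hx Hy Hxy => at_level_apart a b Phi mu x y Hx Hy (proj1 Hxy) (proj2 Hxy)) l x Htr)
    as [p [q [Hrange Hqp]]].
  pose proof (at_level_inI _ _ _ _ _ (Forall_inv (proj1 Htr))) as [Hax _].
  destruct (ncells_spec mu) as [HM _]. pose proof (length_ratio_nonneg mu).
  destruct r_factor_spec as [Hs0 _].
  assert (HM0 : 0 < INR (ncells mu)) by nra.
  set (M := ncells mu) in *. set (h := (b - a) / INR M).
  assert (Hh : 0 < h) by (unfold h; apply Rdiv_lt_0_compat; lra).
  assert (HMh : a + INR M * h = b) by (unfold h; field; lra).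
  enough (length l <= M * (4 * (r - 1) + 1))%nat by (simpl; lia).
  apply (chain_length_le p q (length l) a h M (4 * (r - 1)) Hh).
  - intros i Hi. destruct (Hrange i Hi) as [H1 [H2 [H3 _]]]. lra.
  - exact Hqp.
  - intros s k Hk Hs. pose proof (pos_INR k).
    assert (Hk' : INR k + 1 <= INR M) by (rewrite <- S_INR; apply le_INR; lia).
    apply (no_dense_crossings mu _ _ p q (length l) s Hmu); [nra|nra| | |exact Hqp|exact Hs].
    + replace (a + INR k * h + h - (a + INR k * h)) with h by ring. now apply cell_small.
    + intros i Hi. destruct (Hrange i Hi) as [_ [H2 [_ [H4 H5]]]]. auto.
Qed.

Definition longest_transversal (j : Z) : list R :=
  epsilon (inhabits nil) (fun l => transversal (at_level a b Phi (powerRZ 2 j)) l /\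
    forall l', transversal (at_level a b Phi (powerRZ 2 j)) l' -> (length l' <= length l)%nat).

Lemma longest_transversal_spec j :
  transversal (at_level a b Phi (powerRZ 2 j)) (longest_transversal j) /\
  forall l', transversal (at_level a b Phi (powerRZ 2 j)) l' ->
    (length l' <= length (longest_transversal j))%nat.
Proof.
  unfold longest_transversal. apply epsilon_spec.
  apply exists_longest with (B := (ncells (powerRZ 2 j) * (4 * (r - 1) + 1) + 1)%nat).
  - intros l. apply transversal_length_le, powerRZ2_pos.
  - split; constructor.
Qed.

Definition ncomp (j : Z) : nat := length (longest_transversal j).

Definition comp (j : Z) (i : nat) : R -> Prop :=
  linked (at_level a b Phi (powerRZ 2 j)) (nth i (longest_transversal j) 0).

Lemma comp_is_interval j i : is_interval (comp j i).
Proof. intros x y z Hx Hy Hz. exact (linked_between _ _ x y z Hx Hy Hz). Qed.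

Lemma comp_at_level j i x : comp j i x -> at_level a b Phi (powerRZ 2 j) x.
Proof. apply F_of_linked. Qed.

Lemma comp_disjoint j i j' i' x : (i < ncomp j)%nat -> (i' < ncomp j')%nat ->
  (j, i) <> (j', i') -> ~ (comp j i x /\ comp j' i' x).
Proof.
  intros Hi Hi' Hne [Hx Hx'].
  assert (j = j') as <-
    by exact (at_level_dyadic_unique a b Phi j j' x (comp_at_level _ _ _ Hx)
                (comp_at_level _ _ _ Hx')).
  assert (Hii : i <> i') by (intros <-; now apply Hne).
  pose proof (linked_trans _ _ _ _ Hx (linked_sym _ _ _ Hx')) as Hlink.
  destruct (longest_transversal_spec j) as [Htr _].
  unfold ncomp in *.
  destruct (Nat.lt_total i i') as [Hlt|[Heq|Hgt]]; [|contradiction|].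
  - exact (transversal_not_linked _ _ Htr i i' ltac:(lia) Hlink).
  - exact (transversal_not_linked _ _ Htr i' i ltac:(lia) (linked_sym _ _ _ Hlink)).
Qed.

Lemma comp_band j i x : comp j i x -> / 2 * powerRZ 2 j < Rabs (phi x) < 4 * powerRZ 2 j.
Proof.
  intros Hx. apply comp_at_level in Hx.
  pose proof (at_level_band _ _ _ _ _ Hx) as Hband. pose proof (powerRZ2_pos j).
  rewrite Phi_eq in Hband by exact (at_level_inI _ _ _ _ _ Hx). lra.
Qed.

Lemma comp_cover x : inI a b x /\ phi x <> 0 <->
  exists j i, powerRZ 2 j <= sup_norm a b phi /\ (i < ncomp j)%nat /\ comp j i x.
Proof.
  split.
  - intros [Hx Hphi]. rewrite <- Phi_eq in Hphi by exact Hx.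
    destruct (at_level_exists a b Phi Phi_continuous x Hx Hphi) as [j Hj].
    destruct (longest_transversal_spec j) as [Htr Hmax].
    destruct (transversal_longest_covers _ _ Htr Hmax x Hj) as [i [Hi Hlink]].
    exists j, i. split; [|now split].
    destruct (at_level_attained _ _ _ _ _ Hj) as [s [Hs Hle]].
    pose proof (Phi_le_sup s Hs). lra.
  - intros [j [i [_ [_ Hx]]]]. pose proof (comp_band j i x Hx) as Hband.
    apply comp_at_level, at_level_inI in Hx. split; [exact Hx|].
    pose proof (powerRZ2_pos j). intros H0. rewrite H0, Rabs_R0 in Hband. lra.
Qed.

Lemma ncomp_le j :
  INR (ncomp j) <= 10 * INR r * (1 + (b - a) * rroot r Cr * Rpower (powerRZ 2 j) (- / INR r)).
Proof.
  destruct (longest_transversal_spec j) as [Htr _].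
  pose proof (le_INR _ _ (transversal_length_le _ _ (powerRZ2_pos j) Htr)) as Hlen.
  fold (ncomp j) in Hlen. fold (length_ratio (powerRZ 2 j)).
  destruct (ncells_spec (powerRZ 2 j)) as [_ HM]. destruct r_factor_spec as [Hs0 [_ Hs]].
  pose proof (length_ratio_nonneg (powerRZ 2 j)).
  assert (Hr1 : 1 <= INR r) by (apply (le_INR 1); lia).
  rewrite plus_INR, mult_INR, plus_INR, mult_INR, minus_INR in Hlen by lia. simpl in Hlen.
  set (X := length_ratio (powerRZ 2 j)) in *. set (M := INR (ncells (powerRZ 2 j))) in *.
  assert (M * (4 * (INR r - 1) + 1) <= (r_factor * X + 1) * (4 * (INR r - 1) + 1))
    by (apply Rmult_le_compat_r; lra).
  assert (r_factor * (4 * INR r - 3) * X <= 10 * INR r * X) by (apply Rmult_le_compat_r; lra).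
  nra.
Qed.

End Decomposition.

(* [lambda = 2 ^ j]; the index set [I_lambda] is [{i | i < N j}], and the
   intervals are [J j i]. *)
Theorem theorem2p1 (a b : R) (r : nat) (phi : R -> R) (D : nat -> R -> R) :
  a < b -> (1 <= r)%nat -> is_Cr a b r phi D ->
  let Cr := sup_norm a b (D r) in
  let valid (j : Z) := powerRZ 2 j <= sup_norm a b phi in
  exists (N : Z -> nat) (J : Z -> nat -> R -> Prop),
    (forall j i, valid j -> (i < N j)%nat -> is_interval (J j i)) /\
    (forall j i j' i', valid j -> (i < N j)%nat -> valid j' -> (i' < N j')%nat ->
       (j, i) <> (j', i') -> forall x, ~ (J j i x /\ J j' i' x)) /\
    (forall x, (inI a b x /\ phi x <> 0) <->
       exists j i, valid j /\ (i < N j)%nat /\ J j i x) /\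
    (forall j, valid j ->
       INR (N j) <= 10 * INR r *
         (1 + (b - a) * rroot r Cr * Rpower (powerRZ 2 j) (- / INR r))) /\
    (forall j i x, valid j -> (i < N j)%nat -> J j i x ->
       / 2 * powerRZ 2 j < Rabs (phi x) < 4 * powerRZ 2 j).
Proof.
  intros Hab Hr HC Cr valid.
  exists (ncomp a b D), (comp a b D).
  split; [|split; [|split; [|split]]].
  - intros j i _ _. apply comp_is_interval.
  - intros j i j' i' _ Hi _ Hi' Hne x. now apply (comp_disjoint a b r phi D Hab Hr HC).
  - exact (comp_cover a b r phi D Hab Hr HC).
  - intros j _. exact (ncomp_le a b r phi D Hab Hr HC j).
  - intros j i x _ _. apply (comp_band a b r phi D HC).
Qed.
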